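(* Let $\ell$ be the $x$-axis. Let $P$ be a set of $n$ points with nonnegative $y$-coordinates and pairwise distinct $x$-coordinates, sorted by $x$-coordinate as $p_1,\dots,p_n$. Let $S$ be a finite set of closed disks all of the same radius, with centers having nonpositive $y$-coordinates, each disk $s$ having weight $w(s)>0$, such that no point of $P$ lies on the boundary of any disk of $S$ and every point of $P$ lies in at least one disk of $S$. For a point $p$ let $S_p\subseteq S$ be the set of disks containing $p$. Define numbers $\delta_1,\dots,\delta_n$ by the following procedure: initially $\mathrm{cost}(s)=w(s)$ for all $s\in S$; then for $i=1,2,\dots,n$ in order, set $\delta_i=\min_{s\in S_{p_i}}\mathrm{cost}(s)$, and afterwards set $\mathrm{cost}(s)=w(s)+\delta_i$ for every disk $s\in S\setminus S_{p_i}$. Then for every $i\in\{1,\dots,n\}$, $\delta_i$ equals the minimum total weight of a subset of $S$ whose union covers $\{p_1,\dots,p_i\}$. In particular $\delta_n$ equals the minimum total weight of a subset of $S$ whose union covers $P$.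
   Context: Disks are closed; the value of $\mathrm{cost}(s)$ used when computing $\delta_i$ is its value at the start of iteration $i$ (i.e., after the updates of iterations $1,\dots,i-1$). *)

From HB Require Import structures.
From mathcomp Require Import all_boot all_order all_algebra.
Set Implicit Arguments. Unset Strict Implicit. Unset Printing Implicit Defensive.
Import Order.TTheory GRing.Theory Num.Theory.
Local Open Scope ring_scope.

Definition in_disk (R : realFieldType) (r : R) (c q : R * R) : bool :=
  (q.1 - c.1) ^+ 2 + (q.2 - c.2) ^+ 2 <= r ^+ 2.

Definition on_boundary (R : realFieldType) (r : R) (c q : R * R) : bool :=
  (q.1 - c.1) ^+ 2 + (q.2 - c.2) ^+ 2 == r ^+ 2.

(* minimum of f over a finite set A (0 if A is empty; only used on nonempty A) *)
Definition minf (R : realFieldType) (T : finType) (A : {set T}) (f : T -> R) : R :=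
  match [pick t in A] with
  | Some t0 => \big[Num.min/f t0]_(t in A) f t
  | None => 0
  end.

Definition Sp (R : realFieldType) (D : finType) (r : R) (c : D -> R * R)
  (q : R * R) : {set D} := [set s | in_disk r (c s) q].

Fixpoint deltas_from (R : realFieldType) (D : finType) (r : R) (c : D -> R * R)
  (w : D -> R) (cost : D -> R) (ps : seq (R * R)) : seq R :=
  match ps with
  | [::] => [::]
  | q :: ps' =>
      let d := minf (Sp r c q) cost in
      d :: deltas_from r c w (fun s => if s \in Sp r c q then cost s else w s + d) ps'
  end.

(* delta_1, ..., delta_n (0-indexed), starting from cost = w *)
Definition deltas (R : realFieldType) (D : finType) (r : R) (c : D -> R * R)
  (w : D -> R) (P : seq (R * R)) : seq R := deltas_from r c w w P.

Definition covers (R : realFieldType) (D : finType) (r : R) (c : D -> R * R)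
  (T : {set D}) (Q : seq (R * R)) : bool :=
  all (fun q => [exists s in T, in_disk r (c s) q]) Q.

Definition min_cover_weight (R : realFieldType) (D : finType) (r : R)
  (c : D -> R * R) (w : D -> R) (Q : seq (R * R)) : R :=
  minf [set T : {set D} | covers r c T Q] (fun T => \sum_(s in T) w s).

(* If a disk s
   contains p_a and p_d but not p_b, a < b < d, then every disk containing p_b
   contains p_a or p_d: the center of such a disk t is higher than that of s
   (compare |q - s|^2 - |q - t|^2, an affine function of q, at the three points),
   and two equal disks whose centers are ordered that way cannot exchange two
   points lying above both centers.
   For a disk s through p_i, let p_m, ..., p_{i-1} be the maximal run of points
   before p_i contained in s.  In an optimal cover of p_1, ..., p_i choose s
   through p_i with the longest run; by the gap property the other disks cover
   p_1, ..., p_{m-1}.  Hence OPT(i) = min over s through p_i of w(s) + OPT(m-1),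
   and the procedure maintains exactly cost(s) = w(s) + OPT(m-1), so that
   delta_i = OPT(i). *)
From HB Require Import structures.
From mathcomp Require Import all_boot all_order all_algebra.
From mathcomp Require Import ring lra.
Import Order.TTheory GRing.Theory Num.Theory.
Set Implicit Arguments. Unset Strict Implicit. Unset Printing Implicit Defensive.
Local Open Scope ring_scope.

Section Geometry.
Variable R : realFieldType.
Implicit Types (r al be : R) (a b d s t : R * R).

Lemma in_disk_convex r al be s a d : 0 <= al -> 0 <= be ->
  in_disk r s a -> in_disk r s d ->
  (al * a.1 + be * d.1 - (al + be) * s.1) ^+ 2
    + (al * a.2 + be * d.2 - (al + be) * s.2) ^+ 2 <= (al + be) ^+ 2 * r ^+ 2.
Proof.
rewrite /in_disk => al_ge0 be_ge0 sa sd.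
have -> : (al * a.1 + be * d.1 - (al + be) * s.1) ^+ 2
    + (al * a.2 + be * d.2 - (al + be) * s.2) ^+ 2
  = (al + be) * (al * ((a.1 - s.1) ^+ 2 + (a.2 - s.2) ^+ 2)
                 + be * ((d.1 - s.1) ^+ 2 + (d.2 - s.2) ^+ 2))
    - al * be * ((a.1 - d.1) ^+ 2 + (a.2 - d.2) ^+ 2) by ring.
have ad_ge0 : 0 <= al * be * ((a.1 - d.1) ^+ 2 + (a.2 - d.2) ^+ 2).
  by rewrite !mulr_ge0 // addr_ge0 // sqr_ge0.
have Lal : al * ((a.1 - s.1) ^+ 2 + (a.2 - s.2) ^+ 2) <= al * r ^+ 2.
  exact: ler_wpM2l.
have Lbe : be * ((d.1 - s.1) ^+ 2 + (d.2 - s.2) ^+ 2) <= be * r ^+ 2.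
  exact: ler_wpM2l.
have : (al + be) * (al * ((a.1 - s.1) ^+ 2 + (a.2 - s.2) ^+ 2)
                 + be * ((d.1 - s.1) ^+ 2 + (d.2 - s.2) ^+ 2))
       <= (al + be) * (al * r ^+ 2 + be * r ^+ 2).
  by apply: ler_wpM2l; [exact: addr_ge0 | exact: lerD].
have -> : (al + be) ^+ 2 * r ^+ 2 = (al + be) * (al * r ^+ 2 + be * r ^+ 2) by ring.
lra.
Qed.

(* The point of the chord [a, d] with abscissa b.1 lies in the disk, which
   is convex, while b is not; as b lies above the center, b is above the chord. *)
Lemma above_chord_of_gap r s a b d :
  a.1 < b.1 -> b.1 < d.1 -> s.2 <= b.2 ->
  in_disk r s a -> in_disk r s d -> ~~ in_disk r s b ->
  (d.1 - b.1) * a.2 + (b.1 - a.1) * d.2 < (d.1 - a.1) * b.2.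
Proof.
move=> ab bd sb sa sd sbN.
set al := d.1 - b.1; set be := b.1 - a.1.
have al_gt0 : 0 < al by rewrite subr_gt0.
have be_gt0 : 0 < be by rewrite subr_gt0.
have L_gt0 : 0 < al + be by exact: addr_gt0.
have := in_disk_convex (ltW al_gt0) (ltW be_gt0) sa sd.
have -> : al * a.1 + be * d.1 = (al + be) * b.1 by rewrite /al /be; ring.
have -> : d.1 - a.1 = al + be by rewrite /al /be; ring.
move=> conv; rewrite ltNge; apply: contra sbN => chord_le.
rewrite /in_disk -(ler_pM2l (exprn_gt0 2 L_gt0)).
have -> : (al + be) ^+ 2 * ((b.1 - s.1) ^+ 2 + (b.2 - s.2) ^+ 2)
  = ((al + be) * b.1 - (al + be) * s.1) ^+ 2 + ((al + be) * b.2 - (al + be) * s.2) ^+ 2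
  by ring.
have b_above : 0 <= (al + be) * b.2 - (al + be) * s.2.
  by rewrite -mulrBr mulr_ge0 ?subr_ge0 // ltW.
nra.
Qed.

(* [q |-> |q - s|^2 - |q - t|^2] is affine, which gives the identity [key]. *)
Lemma gap_disk_center_higher r s t a b d :
  a.1 < b.1 -> b.1 < d.1 -> s.2 <= b.2 ->
  in_disk r s a -> in_disk r s d -> ~~ in_disk r s b ->
  in_disk r t b -> ~~ in_disk r t a -> ~~ in_disk r t d -> s.2 < t.2.
Proof.
move=> ab bd sb sa sd sbN tb taN tdN.
have chord := above_chord_of_gap ab bd sb sa sd sbN.
move: sa sd sbN tb taN tdN; rewrite /in_disk -!ltNge => sa sd sbN tb taN tdN.
set al := d.1 - b.1 in chord *; set be := b.1 - a.1 in chord *.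
have al_gt0 : 0 < al by rewrite /al subr_gt0.
have be_gt0 : 0 < be by rewrite /be subr_gt0.
set f := fun q : R * R => (q.1 - s.1) ^+ 2 + (q.2 - s.2) ^+ 2
                          - ((q.1 - t.1) ^+ 2 + (q.2 - t.2) ^+ 2).
have key : (al + be) * f b - al * f a - be * f d
         = 2 * (t.2 - s.2) * ((d.1 - a.1) * b.2 - (al * a.2 + be * d.2)).
  by rewrite /f /al /be; ring.
have fb_gt0 : 0 < (al + be) * f b.
  by apply: mulr_gt0; [exact: addr_gt0 | rewrite /f /=; lra].
have fa_lt0 : al * f a < 0 by rewrite pmulr_rlt0 // /f /=; lra.
have fd_lt0 : be * f d < 0 by rewrite pmulr_rlt0 // /f /=; lra.
have : 0 < 2 * (t.2 - s.2) * ((d.1 - a.1) * b.2 - (al * a.2 + be * d.2)).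
  by rewrite -key; lra.
by rewrite -mulrA pmulr_rgt0 // pmulr_lgt0 ?subr_gt0.
Qed.

(* Coordinates relative to the center of [t]; [s] is [t] shifted by [-(Dx, Dy)]. *)
Lemma shifted_disks_no_exchange r X1 u1 X3 u3 Dx Dy :
  X1 < X3 -> 0 <= u1 -> 0 <= u3 -> 0 <= Dx -> 0 <= Dy ->
  X1 ^+ 2 + u1 ^+ 2 <= r ^+ 2 -> r ^+ 2 < (X1 + Dx) ^+ 2 + (u1 + Dy) ^+ 2 ->
  (X3 + Dx) ^+ 2 + (u3 + Dy) ^+ 2 <= r ^+ 2 -> r ^+ 2 < X3 ^+ 2 + u3 ^+ 2 -> False.
Proof.
move=> X13 u1_ge0 u3_ge0 Dx_ge0 Dy_ge0 tb sbN sd tdN.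
have d_moves_in : 2 * (X3 * Dx + u3 * Dy) + (Dx ^+ 2 + Dy ^+ 2) < 0 by nra.
have b_moves_out : 0 < 2 * (X1 * Dx + u1 * Dy) + (Dx ^+ 2 + Dy ^+ 2) by nra.
have u31 : u3 < u1 by nra.
have X3_gt0 : 0 < X3 by nra.
nra.
Qed.

Lemma in_disk_gap r s t a b d :
  a.1 < b.1 -> b.1 < d.1 -> 0 <= a.2 -> 0 <= b.2 -> 0 <= d.2 ->
  s.2 <= 0 -> t.2 <= 0 ->
  in_disk r s a -> in_disk r s d -> ~~ in_disk r s b -> in_disk r t b ->
  in_disk r t a || in_disk r t d.
Proof.
move=> ab bd a_ge0 b_ge0 d_ge0 s_le0 t_le0 sa sd sbN tb.
apply/negPn/negP; rewrite negb_or => /andP[taN tdN].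
have st := gap_disk_center_higher ab bd (le_trans s_le0 b_ge0) sa sd sbN tb taN tdN.
move: sa sd sbN tb taN tdN; rewrite /in_disk -!ltNge => sa sd sbN tb taN tdN.
(* Up to a reflection in a vertical line, [t] is centered up and to the right of [s]. *)
case: (lerP s.1 t.1) => st1.
  apply: (@shifted_disks_no_exchange r (b.1 - t.1) (b.2 - t.2) (d.1 - t.1) (d.2 - t.2)
     (t.1 - s.1) (t.2 - s.2)); lra.
apply: (@shifted_disks_no_exchange r (t.1 - b.1) (b.2 - t.2) (t.1 - a.1) (a.2 - t.2)
     (s.1 - t.1) (t.2 - s.2)); lra.
Qed.
End Geometry.

Lemma minf_le (R : realFieldType) (T : finType) (A : {set T}) (f : T -> R) t :
  t \in A -> minf A f <= f t.
Proof.
rewrite /minf => At; case: pickP => [t0 At0 | A0]; last by rewrite A0 in At.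
exact: bigmin_le_cond.
Qed.

Lemma minf_attained (R : realFieldType) (T : finType) (A : {set T}) (f : T -> R) t :
  t \in A -> exists2 u, u \in A & minf A f = f u.
Proof.
rewrite /minf => At; case: pickP => [t0 At0 | A0]; last by rewrite A0 in At.
have [u Au u_min] := @arg_minP _ _ _ t0 (mem A) f At0.
exists u => //; apply/le_anti/andP; split; first exact: bigmin_le_cond.
by apply/bigmin_geP; split=> //; exact: u_min.
Qed.

Definition update_cost (R : realFieldType) (D : finType) (r : R) (c : D -> R * R)
  (w : D -> R) (cost : D -> R) (q : R * R) : D -> R :=
  fun s => if s \in Sp r c q then cost s else w s + minf (Sp r c q) cost.

Lemma nth_deltas_from (R : realFieldType) (D : finType) (r : R) (c : D -> R * R)
  (w cost : D -> R) (ps : seq (R * R)) i : (i < size ps)%N ->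
  nth 0 (deltas_from r c w cost ps) i =
  minf (Sp r c (nth (0, 0) ps i)) (foldl (update_cost r c w) cost (take i ps)).
Proof. by elim: ps cost i => [|q ps IH] cost [|i] //= /IH ->. Qed.

Section CoverDP.
Variables (R : realFieldType) (P : seq (R * R)) (D : finType).
Variables (c : D -> R * R) (r : R) (w : D -> R).
Hypothesis P_y_ge0 : forall q, q \in P -> 0 <= q.2.
Hypothesis P_sorted : sorted (fun a b : R * R => a.1 < b.1) P.
Hypothesis c_y_le0 : forall s, (c s).2 <= 0.
Hypothesis w_gt0 : forall s, 0 < w s.
Hypothesis P_covered : forall q, q \in P -> exists s, in_disk r (c s) q.

Local Notation p k := (nth (0 : R, 0 : R) P k).

Definition opt m := min_cover_weight r c w (take m P).

Definition cost_before i := foldl (update_cost r c w) w (take i P).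

Fixpoint run_start (s : D) (i : nat) : nat :=
  if i is i'.+1 then if s \in Sp r c (p i') then run_start s i' else i
  else 0.

Lemma run_start_le s i : (run_start s i <= i)%N.
Proof. by elim: i => //= i IH; case: ifP => // _; exact: leqW. Qed.

Lemma in_disk_run s i k :
  (run_start s i <= k)%N -> (k < i)%N -> in_disk r (c s) (p k).
Proof.
elim: i => // i IH /=; case: ifP => [s_pi | _ /leq_trans/[apply]]; last by rewrite ltnn.
by move=> m_k; rewrite ltnS leq_eqVlt => /predU1P[-> | /(IH m_k)]; rewrite ?inE in s_pi.
Qed.

Lemma not_in_disk_before_run s i :
  (0 < run_start s i)%N -> ~~ in_disk r (c s) (p (run_start s i).-1).
Proof. by elim: i => // i IH /=; case: ifP => //= s_pi _; rewrite inE in s_pi; rewrite s_pi. Qed.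

Lemma covers_takeP T m : covers r c T (take m P) <->
  (forall k, (k < minn m (size P))%N -> exists2 s, s \in T & in_disk r (c s) (p k)).
Proof.
rewrite /covers; split=> [/(all_nthP (0, 0)) T_cov k k_lt | T_cov].
  have := T_cov k; rewrite size_take_min => /(_ k_lt) /existsP[s /andP[Ts s_pk]].
  by exists s; rewrite // -(nth_take _ (leq_trans k_lt (geq_minl _ _))).
apply/(all_nthP (0, 0)) => k; rewrite size_take_min => k_lt.
have [s Ts s_pk] := T_cov k k_lt.
by apply/existsP; exists s; rewrite Ts nth_take // (leq_trans k_lt (geq_minl _ _)).
Qed.

Lemma opt_le m C : covers r c C (take m P) -> opt m <= \sum_(s in C) w s.
Proof. by move=> C_cov; apply: minf_le; rewrite inE. Qed.

Lemma opt_attained m :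
  exists2 C, covers r c C (take m P) & opt m = \sum_(s in C) w s.
Proof.
have setT_cov : setT \in [set T : {set D} | covers r c T (take m P)].
  rewrite inE; apply/allP => q /mem_take /P_covered[s s_q].
  by apply/existsP; exists s; rewrite inE.
by have [C] := minf_attained (fun T : {set D} => \sum_(s in T) w s) setT_cov; rewrite inE; exists C.
Qed.

Lemma opt0 : opt 0 = 0.
Proof.
apply/le_anti/andP; split.
  have -> : 0 = \sum_(s in set0) w s by rewrite big_set0.
  by apply: opt_le; rewrite take0.
have [C _ ->] := opt_attained 0.
by apply: sumr_ge0 => s _; exact: ltW.
Qed.

Lemma in_disk_gap_nth k b j s t : (k < b)%N -> (b < j)%N -> (j < size P)%N ->
  in_disk r (c s) (p k) -> in_disk r (c s) (p j) -> ~~ in_disk r (c s) (p b) ->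
  in_disk r (c t) (p b) -> in_disk r (c t) (p k) || in_disk r (c t) (p j).
Proof.
move=> kb bj j_lt; have b_lt := ltn_trans bj j_lt; have k_lt := ltn_trans kb b_lt.
have lt_trans_x : transitive (fun a b : R * R => a.1 < b.1) by move=> ? ? ?; exact: lt_trans.
have x_lt m n : (m < n)%N -> (n < size P)%N -> (p m).1 < (p n).1.
  move=> mn n_lt; apply: (sorted_ltn_nth lt_trans_x (0, 0) P_sorted) => //.
  by rewrite inE (ltn_trans mn n_lt).
apply: in_disk_gap; rewrite ?x_lt ?P_y_ge0 ?mem_nth //.
Qed.

(* With [b] the index just before the run of [s] ending at [p i], a disk [t]
   through [p b] contains every earlier point [p k] of [s]: otherwise it
   contains [p i] by the gap lemma, and the index [j] just before its run
   satisfies [b < j < i], so the gap lemma at [k, b, j] fails. *)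
Lemma in_disk_before_gap i k s t :
  (i < size P)%N -> in_disk r (c s) (p i) ->
  (k < (run_start s i).-1)%N -> in_disk r (c s) (p k) ->
  in_disk r (c t) (p (run_start s i).-1) ->
  (in_disk r (c t) (p i) -> (run_start s i <= run_start t i)%N) ->
  in_disk r (c t) (p k).
Proof.
move=> i_lt s_pi kb s_pk t_pb t_min.
have m_gt0 : (0 < run_start s i)%N by case: (run_start s i) kb.
set m := run_start s i in kb t_pb t_min m_gt0 *; set b := m.-1 in kb t_pb *.
have bm : m = b.+1 by rewrite prednK.
have s_pbN : ~~ in_disk r (c s) (p b) by exact: not_in_disk_before_run.
have bi : (b < i)%N by rewrite -ltnS -bm ltnS run_start_le.
have /orP[// | t_pi] := in_disk_gap_nth kb bi i_lt s_pk s_pi s_pbN t_pb.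
set j := (run_start t i).-1.
have mj : (m <= (run_start t i))%N := t_min t_pi.
have jm : run_start t i = j.+1 by rewrite prednK // (leq_trans m_gt0).
have t_pjN : ~~ in_disk r (c t) (p j).
  by apply: not_in_disk_before_run; rewrite jm.
have bj : (b < j)%N.
  rewrite ltn_neqAle -ltnS -bm -jm mj andbT.
  by apply: contraNneq t_pjN => <-.
have ji : (j < i)%N by rewrite -ltnS -jm ltnS run_start_le.
have s_pj : in_disk r (c s) (p j) by apply: in_disk_run ji; rewrite -/m bm.
have /orP[// | t_pj] := in_disk_gap_nth kb bj (ltn_trans ji i_lt) s_pk s_pj s_pbN t_pb.
by rewrite t_pj in t_pjN.
Qed.

Lemma cover_minus_longest_run i C s :
  (i < size P)%N -> covers r c C (take i.+1 P) ->
  s \in C -> in_disk r (c s) (p i) ->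
  (forall t, t \in C -> in_disk r (c t) (p i) -> (run_start s i <= run_start t i)%N) ->
  covers r c (C :\ s) (take (run_start s i) P).
Proof.
move=> i_lt /covers_takeP C_cov Cs s_pi s_min; apply/covers_takeP => k.
rewrite leq_min => /andP[k_m _]; have k_i := leq_trans k_m (run_start_le s i).
have in_C n : (n < i)%N -> exists2 t, t \in C & in_disk r (c t) (p n).
  by move=> n_i; apply: C_cov; rewrite leq_min ltnW //= (ltn_trans n_i).
have [t Ct t_pk] := in_C k k_i.
have [ts | ts] := eqVneq t s; last by exists t; rewrite // !inE ts.
move: t_pk; rewrite ts => s_pk.
set b := (run_start s i).-1.
have bm : run_start s i = b.+1 by rewrite prednK // (leq_ltn_trans _ k_m).
have s_pbN : ~~ in_disk r (c s) (p b) by apply: not_in_disk_before_run; rewrite bm.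
have kb : (k < b)%N.
  by rewrite ltn_neqAle -ltnS -bm k_m andbT; apply: contraNneq s_pbN => <-.
have b_i : (b < i)%N by rewrite -ltnS -bm ltnS run_start_le.
have [u Cu u_pb] := in_C b b_i.
exists u; last exact: (in_disk_before_gap i_lt s_pi kb s_pk u_pb (s_min u Cu)).
by rewrite !inE Cu andbT; apply: contraNneq s_pbN => <-.
Qed.

Lemma opt_succ_le_run_cost i s : (i < size P)%N -> in_disk r (c s) (p i) ->
  opt i.+1 <= w s + opt (run_start s i).
Proof.
move=> i_lt s_pi; have [C C_cov ->] := opt_attained (run_start s i).
have sC_cov : covers r c (s |: C) (take i.+1 P).
  apply/covers_takeP => k; rewrite leq_min ltnS => /andP[k_i _].
  have [k_m | m_k] := ltnP k (run_start s i).
    have [|t Ct t_pk] := (covers_takeP C _).1 C_cov k.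
      by rewrite leq_min k_m (leq_ltn_trans k_i).
    by exists t; rewrite // !inE Ct orbT.
  exists s; first by rewrite !inE eqxx.
  by move: k_i; rewrite leq_eqVlt => /predU1P[-> // | /(in_disk_run m_k)].
apply: le_trans (opt_le sC_cov) _.
have [Cs | CsN] := boolP (s \in C); last by rewrite big_setU1.
by rewrite (setUidPr _) ?sub1set // lerDr ltW.
Qed.

Lemma opt_succ_ge_run_cost i : (i < size P)%N ->
  exists2 s, in_disk r (c s) (p i) & w s + opt (run_start s i) <= opt i.+1.
Proof.
move=> i_lt; have [C C_cov C_opt] := opt_attained i.+1.
have [|s1 Cs1 s1_pi] := (covers_takeP C _).1 C_cov i; first by rewrite leq_min ltnSn.
have Cs1_pi : (s1 \in C) && in_disk r (c s1) (p i) by rewrite Cs1 s1_pi.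
have [s /andP[Cs s_pi] s_min] :=
  @arg_minnP D s1 (fun s => (s \in C) && in_disk r (c s) (p i)) (run_start^~ i) Cs1_pi.
exists s; rewrite // C_opt (big_setD1 s Cs) lerD2l; apply: opt_le.
by apply: cover_minus_longest_run => // t Ct t_pi; apply: s_min; rewrite Ct.
Qed.

Lemma minf_run_cost i cost : (i < size P)%N ->
  (forall s, cost s = w s + opt (run_start s i)) ->
  minf (Sp r c (p i)) cost = opt i.+1.
Proof.
move=> i_lt costE; have [s0 s0_pi] := P_covered (mem_nth (0, 0) i_lt).
have s0_Sp : s0 \in Sp r c (p i) by rewrite inE.
apply/le_anti/andP; split.
  have [s s_pi opt_ge] := opt_succ_ge_run_cost i_lt.
  have s_Sp : s \in Sp r c (p i) by rewrite inE.
  by apply: le_trans (minf_le cost s_Sp) _; rewrite costE.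
have [s] := minf_attained cost s0_Sp; rewrite inE costE => s_pi ->.
exact: opt_succ_le_run_cost.
Qed.

Lemma cost_before_run_start i s : (i <= size P)%N ->
  cost_before i s = w s + opt (run_start s i).
Proof.
elim: i s => [|i IH] s i_lt; first by rewrite /cost_before take0 opt0 addr0.
rewrite /cost_before (take_nth (0, 0) i_lt) -cats1 foldl_cat -/(cost_before i).
rewrite /= /update_cost; case: ifP => _; first exact: IH (ltnW i_lt).
by rewrite (minf_run_cost i_lt) // => t; exact: IH (ltnW i_lt).
Qed.
End CoverDP.

Theorem mainTheorem2 (R : realFieldType) (P : seq (R * R))
  (D : finType) (c : D -> R * R) (r : R) (w : D -> R) :
  0 < r ->
  injective c ->
  (forall q, q \in P -> 0 <= q.2) ->
  sorted (fun a b : R * R => a.1 < b.1) P ->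
  (forall s, (c s).2 <= 0) ->
  (forall s, 0 < w s) ->
  (forall q s, q \in P -> ~~ on_boundary r (c s) q) ->
  (forall q, q \in P -> exists s, in_disk r (c s) q) ->
  forall i : nat, (i < size P)%N ->
    nth 0 (deltas r c w P) i = min_cover_weight r c w (take i.+1 P).
Proof.
move=> _ _ P_y_ge0 P_sorted c_y_le0 w_gt0 _ P_covered i i_lt.
rewrite /deltas nth_deltas_from //.
apply: minf_run_cost => // s.
exact: cost_before_run_start (ltnW i_lt).
Qed.
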